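(* Let $A\in\mathbb K^{n\times n}$ have rank at most $s$, let $G,H\in\mathbb K^{n\times t}$, set $M=A-GH^{T}$ and $r=s+t$. Let $S\subseteq\mathbb K$ be finite. Let $T_1\in\mathbb K^{n\times r}$ and $T_2\in\mathbb K^{r\times n}$ be Toeplitz matrices whose defining entries ($n+r-1$ for each) are chosen independently and uniformly at random from $S$. Let $P=AT_1-G(H^TT_1)$ and $Q=T_2A-(T_2G)H^T$. Then, with probability at least $1-2r/|S|$, the row rank profile of $P$ equals the row rank profile of $M$ and the column rank profile of $Q$ equals the column rank profile of $M$.
   Context: The row rank profile of a matrix $X$ is the increasing sequence of indices $i$ such that row $i$ of $X$ is not in the span of rows $1,\dots,i-1$ of $X$; the column rank profile is defined analogously with columns. A Toeplitz matrix $T$ is one with $T_{i,j}$ depending only on $i-j$; an $n\times r$ Toeplitz matrix is determined by $n+r-1$ entries. *)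

From HB Require Import structures.
From mathcomp Require Import all_boot all_order all_algebra.
Set Implicit Arguments. Unset Strict Implicit. Unset Printing Implicit Defensive.
Import Order.TTheory GRing.Theory Num.Theory.
Local Open Scope ring_scope.

Definition prev_rows (K : fieldType) (m n : nat) (X : 'M[K]_(m, n)) (i : nat)
  : 'M[K]_(m, n) :=
  \matrix_(j, k) (if (j < i)%N then X j k else 0).

Definition row_rank_profile (K : fieldType) (m n : nat) (X : 'M[K]_(m, n))
  : seq nat :=
  [seq val i | i <- enum 'I_m & ~~ (row i X <= prev_rows X i)%MS].

Definition col_rank_profile (K : fieldType) (m n : nat) (X : 'M[K]_(m, n))
  : seq nat := row_rank_profile X^T.

Definition toeplitz (K : Type) (m p : nat) (c : nat -> K) : 'M[K]_(m, p) :=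
  \matrix_(i, j) c (i + p - 1 - j)%N.

(* Random entries: an index vector into the finite sample set S (a seq). *)
Definition entries_of (K : Type) (x0 : K) (S : seq K) (N : nat)
  (f : {ffun 'I_N -> 'I_(size S)}) : nat -> K :=
  fun k => nth x0 S (if @insub _ (fun k => k < N)%N _ k is Some i then (f i : nat) else 0%N).
Arguments entries_of {K} x0 S {N} f k.

From HB Require Import structures.
From mathcomp Require Import all_boot all_order all_algebra.
From mathcomp Require Import zify ring.
Set Implicit Arguments. Unset Strict Implicit. Unset Printing Implicit Defensive.
Import Order.TTheory GRing.Theory Num.Theory.
Local Open Scope ring_scope.

(* Since P = M T1 and Q = T2 M, it suffices that multiplication by T1 (resp.
   T2) preserves the rank of M: right multiplication that is injective on the
   row space keeps every row dependency, hence the row rank profile.  The rank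
   of M T1 is rho = rank M as soon as the rho x rho matrix B W(c) is
   nonsingular, where B is a row basis of M and W(c) is the Hankel matrix
   formed by the last rho columns of T1 in reverse order.  For B of full row
   rank, det (B W(c)) is affine in the top entry of W(c), with a slope that,
   after an invertible row operation, is a determinant of the same shape of
   size rho - 1; induction (Schwartz-Zippel style) then shows that a random
   draw is singular with probability at most rho/|S| <= r/|S|.  The bound
   follows by a union bound over T1 and T2. *)

Section RankProfile.
Variable K : fieldType.

Lemma prev_rows_mulmx m n p (X : 'M[K]_(m, n)) (T : 'M[K]_(n, p)) i :
  prev_rows (X *m T) i = prev_rows X i *m T.
Proof.
apply/matrixP=> j k; rewrite !mxE; case: ifP => hj.
  by apply: eq_bigr => l _; rewrite mxE hj.
by rewrite big1 // => l _; rewrite mxE hj mul0r.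
Qed.

Lemma prev_rows_sub m n (X : 'M[K]_(m, n)) i : (prev_rows X i <= X)%MS.
Proof.
apply/row_subP => j; case hj: (j < i)%N.
  by apply: (eq_row_sub j); apply/rowP => k; rewrite !mxE hj.
suff -> : row j (prev_rows X i) = 0 by apply: sub0mx.
by apply/rowP => k; rewrite !mxE hj.
Qed.

(* Multiplying by T is injective on the row space of X exactly when it
   preserves the rank, so it can neither create nor destroy a dependency
   between a row and the rows above it. *)
Lemma row_rank_profile_mulmx m n p (X : 'M[K]_(m, n)) (T : 'M[K]_(n, p)) :
  \rank (X *m T) = \rank X -> row_rank_profile (X *m T) = row_rank_profile X.
Proof.
move/mxrank_injP => /eqP injT; rewrite /row_rank_profile; congr (map _ _).
apply: eq_filter => i /=; congr negb.
rewrite prev_rows_mulmx row_mul; apply/idP/idP; last exact: submxMr.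
case/submxP => D hD; set v := row i X - D *m prev_rows X i.
have vX : (v <= X)%MS.
  rewrite addmx_sub ?row_sub // -mulNmx.
  exact: submx_trans (submxMl _ _) (prev_rows_sub _ _).
have vT : (v <= kermx T)%MS by apply/sub_kermxP; rewrite mulmxBl hD mulmxA subrr.
have /eqP : v = 0 by apply/eqP; rewrite -submx0 -injT sub_capmx vX.
by rewrite subr_eq0 => /eqP ->; apply: submxMl.
Qed.

Lemma mxrank_mulmx_minor m n q (X : 'M[K]_(m, n)) (T : 'M[K]_(n, q))
    (g : 'I_(\rank X) -> 'I_q) :
  \det (row_base X *m colsub g T) != 0 -> \rank (X *m T) = \rank X.
Proof.
move=> minor_nz; apply/eqP; rewrite eqn_leq mxrankM_maxl /=.
rewrite -{1}(@mxrank_unit _ _ (row_base X *m colsub g T)); last first.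
  by rewrite unitmxE unitfE.
rewrite -[T in colsub g T]mulmx1 -mulmx_colsub mulmxA.
apply: leq_trans (mxrankM_maxl _ _) (mxrankS _).
by rewrite submxMr // eq_row_base.
Qed.

End RankProfile.

Definition hankel (K : Type) (n p : nat) (c : nat -> K) : 'M[K]_(n, p) :=
  \matrix_(i, j) c (i + j)%N.

Section HankelMinors.
Variable K : fieldType.

Lemma mxrank_row'_row m n (X : 'M[K]_(m.+1, n)) i :
  (\rank X <= \rank (row' i X) + \rank (row i X))%N.
Proof.
have X_sub : (X <= row' i X + row i X)%MS.
  apply/row_subP => j; case: (unliftP i j) => [j'|] ->; last exact: addsmxSr.
  apply: submx_trans (addsmxSl _ (row i X)).
  by apply: (eq_row_sub j'); apply/rowP => k; rewrite !mxE.
exact: leq_trans (mxrankS X_sub) (mxrank_adds_leqif _ _).1.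
Qed.

Lemma col'_hankel n p (c : nat -> K) :
  col' ord_max (hankel n p.+1 c) = hankel n p c.
Proof. by apply/matrixP => i j; rewrite !mxE; congr (c (_ + _)); apply: lift_max. Qed.

Lemma mul_hankel_col'_max rho n p (B : 'M[K]_(rho, n.+1)) (c : nat -> K) :
  col ord_max B = 0 -> B *m hankel n.+1 p c = col' ord_max B *m hankel n p c.
Proof.
move=> /matrixP B_max; apply/matrixP => i j; rewrite !mxE big_ord_recr /=.
have := B_max i 0; rewrite !mxE => ->; rewrite mul0r addr0.
apply: eq_bigr => l _; rewrite !mxE.
by congr (B i _ * c (_ + _)%N); apply: val_inj; rewrite /=; symmetry; apply: lift_max.
Qed.

Lemma mxrank_col'_max rho n (B : 'M[K]_(rho, n.+1)) :
  col ord_max B = 0 -> \rank (col' ord_max B) = \rank B.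
Proof.
move=> B_max; apply/eqP; rewrite eqn_leq; apply/andP; split.
  by rewrite col'Esub -[B in colsub _ B]mulmx1 -mulmx_colsub mxrankM_maxl.
rewrite -mxrank_tr -[\rank (col' _ _)]mxrank_tr tr_col'.
by have := mxrank_row'_row B^T ord_max; rewrite -tr_col B_max trmx0 mxrank0 addn0.
Qed.

Lemma col'_mul_hankel m n p (B : 'M[K]_(m, n)) (c : nat -> K) :
  col' ord_max (B *m hankel n p.+1 c) = B *m hankel n p c.
Proof. by rewrite col'Esub -mulmx_colsub -col'Esub col'_hankel. Qed.

(* Its determinant is the coefficient of the top entry [c (n + r)] in
   [det (B *m hankel n.+1 r.+1 c)]: that entry only occurs in the last column,
   with coefficient vector [col ord_max B]. *)
Definition top_coef_mx r n (B : 'M[K]_(r.+1, n.+1)) (c : nat -> K) : 'M[K]_r.+1 :=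
  \matrix_(i, j) if unlift ord_max j is Some k then (B *m hankel n.+1 r c) i k
                 else B i ord_max.

Lemma col'_top_coef_mx r n (B : 'M[K]_(r.+1, n.+1)) c :
  col' ord_max (top_coef_mx B c) = B *m hankel n.+1 r c.
Proof. by apply/matrixP => i j; rewrite !mxE liftK mxE. Qed.

Lemma col_top_coef_mx r n (B : 'M[K]_(r.+1, n.+1)) c :
  col ord_max (top_coef_mx B c) = col ord_max B.
Proof. by apply/matrixP => i j; rewrite !mxE unlift_none. Qed.

Section TopEntry.
Variables (r n : nat) (B : 'M[K]_(r.+1, n.+1)) (c1 c2 : nat -> K).
Hypothesis c12 : forall k, k != (n + r)%N -> c1 k = c2 k.

Lemma hankel_below_top : hankel n.+1 r c1 = hankel n.+1 r c2.
Proof.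
apply/matrixP => i j; rewrite !mxE c12 //.
by have := ltn_ord i; have := ltn_ord j; lia.
Qed.

Lemma top_coef_mx_below_top : top_coef_mx B c1 = top_coef_mx B c2.
Proof. by rewrite /top_coef_mx hankel_below_top. Qed.

Lemma det_mul_hankel_top :
  \det (B *m hankel n.+1 r.+1 c1) =
  \det (B *m hankel n.+1 r.+1 c2) + (c1 (n + r)%N - c2 (n + r)%N) * \det (top_coef_mx B c2).
Proof.
rewrite -det_tr -[\det (B *m _ c2)]det_tr -[\det (top_coef_mx B c2)]det_tr.
rewrite -[\det (B *m hankel n.+1 r.+1 c2)^T]mul1r.
apply: (determinant_multilinear (i0 := ord_max)); rewrite -?tr_col'.
- apply/rowP => j; rewrite !mxE unlift_none !big_ord_recr /=.
  rewrite (eq_bigr (fun l => B j (widen_ord (leqnSn n) l) *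
                             hankel n.+1 r.+1 c2 (widen_ord (leqnSn n) l) ord_max)).
    by rewrite !mxE; ring.
  by move=> l _; rewrite !mxE c12 //=; have := ltn_ord l; lia.
- by rewrite !col'_mul_hankel hankel_below_top.
- by rewrite col'_top_coef_mx col'_mul_hankel hankel_below_top.
Qed.
End TopEntry.

Lemma top_coef_mx_singular r n (B : 'M[K]_(r.+1, n.+1)) :
  \rank B = r.+1 -> col ord_max B != 0 ->
  exists2 B' : 'M[K]_(r, n.+1), \rank B' = r &
    forall c, \det (top_coef_mx B c) = 0 -> \det (B' *m hankel n.+1 r c) = 0.
Proof.
move=> rkB; set u := col ord_max B => u_nz.
(* An invertible E sends the column u to a multiple of the first basis vector,
   so expanding [det (E *m top_coef_mx B c)] along its last column leaves a
   single cofactor. *)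
pose E := invmx (col_ebase u); pose a := row_ebase u 0 0.
have E_unit : E \in unitmx by rewrite unitmx_inv col_ebase_unit.
have a_nz : a != 0 by have := row_ebase_unit u; rewrite unitmxE det_mx11 unitfE.
have Eu : E *m u = pid_mx 1 *m row_ebase u.
  have rku : \rank u = 1%N by apply/eqP; rewrite eqn_leq rank_leq_col lt0n mxrank_eq0.
  by rewrite -{1}(mulmx_ebase u) rku /E -!mulmxA mulKmx ?col_ebase_unit.
exists (row' ord0 (E *m B)).
  have rkEB : \rank (E *m B) = r.+1 by rewrite eqmxMfull ?row_full_unit.
  apply/eqP; rewrite eqn_leq rank_leq_row /=.
  have := leq_trans (mxrank_row'_row (E *m B) ord0) (leq_add (leqnn _) (rank_leq_row _)).
  by rewrite rkEB addn1 ltnS.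
move=> c det0; set X := E *m top_coef_mx B c.
have colX : col ord_max X = pid_mx 1 *m row_ebase u.
  by rewrite /X colEsub -mulmx_colsub -colEsub col_top_coef_mx -/u Eu.
have X_max i : X i ord_max = (i == ord0)%:R * a.
  move/matrixP: colX => /(_ i 0); rewrite [LHS]mxE => ->.
  rewrite !mxE big_ord1 !mxE.
  by case: (unliftP ord0 i) => [j|] ->; rewrite /= ?mul0r.
have : \det X = 0 by rewrite det_mulmx det0 mulr0.
rewrite (expand_det_col _ ord_max) (bigD1 ord0) //= big1 ?addr0; last first.
  by move=> i /negPf i_nz; rewrite X_max i_nz mul0r mul0r.
rewrite X_max eqxx mul1r /cofactor /X col'Esub -mulmx_colsub -col'Esub col'_top_coef_mx.
rewrite mulmxA row'Esub -mul_rowsub_mx -row'Esub => /eqP.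
by rewrite !mulf_eq0 (negbTE a_nz) signr_eq0 => /eqP.
Qed.

End HankelMinors.

Lemma card_section_ffun (I T : finType) (k : I) (C : {set {ffun I -> T}}) :
  {in C &, forall f g : {ffun I -> T}, (forall j, j != k -> f j = g j) -> f = g} ->
  (#|C| * #|T| <= #|{ffun I -> T}|)%N.
Proof.
move=> C_section; rewrite -cardsT -cardsX.
pose upd (fx : {ffun I -> T} * T) := [ffun j => if j == k then fx.2 else fx.1 j].
rewrite -(card_in_imset (f := upd)) ?max_card // => -[f x] [g y] /setXP[Cf _] /setXP[Cg _].
move=> /ffunP fg; have xy : x = y by have := fg k; rewrite !ffunE eqxx.
rewrite xy (C_section f g) // => j jk.
by have := fg j; rewrite !ffunE (negPf jk).
Qed.

Section SingularDraws.
Variables (K : fieldType) (S : seq K).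
Hypothesis S_uniq : uniq S.

Lemma entries_ofE N (f : {ffun 'I_N -> 'I_(size S)}) (k : 'I_N) :
  entries_of 0 S f k = nth 0 S (f k).
Proof. by rewrite /entries_of valK. Qed.

Lemma entries_of_off N (f g : {ffun 'I_N -> 'I_(size S)}) (k : 'I_N) m :
  (forall j, j != k -> f j = g j) -> m != val k ->
  entries_of 0 S f m = entries_of 0 S g m.
Proof.
move=> fg mk; rewrite /entries_of; case: insubP => [j _ jm|//].
by rewrite fg //; apply: contraNneq mk => <-; rewrite jm.
Qed.

Definition singular_draws N rho n (B : 'M[K]_(rho, n)) :
  {set {ffun 'I_N -> 'I_(size S)}} :=
  [set f | \det (B *m hankel n rho (entries_of 0 S f)) == 0].

(* Among draws differing only in the top entry, [det (B *m hankel)] is an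
   affine function of that entry with nonzero slope [det (top_coef_mx B c)],
   so at most one of them is singular. *)
Lemma card_singular_top_coef N r n (B : 'M[K]_(r.+1, n.+1)) : (n + r < N)%N ->
  (#|[set f in singular_draws N B |
      \det (top_coef_mx B (entries_of 0%R S f)) != 0%R]| * size S
   <= #|{ffun 'I_N -> 'I_(size S)}|)%N.
Proof.
move=> top_lt; rewrite -[X in (_ * X <= _)%N]card_ord.
apply: (card_section_ffun (k := Ordinal top_lt)) => f g.
rewrite !inE => /andP[/eqP f_sing f_nz] /andP[/eqP g_sing _] fg.
have efg m : m != (n + r)%N -> entries_of 0 S f m = entries_of 0 S g m.
  exact: (entries_of_off (k := Ordinal top_lt)).
have := det_mul_hankel_top B efg; rewrite f_sing g_sing add0r => /esym/eqP.
rewrite mulf_eq0 -(top_coef_mx_below_top B efg) (negPf f_nz) orbF subr_eq0.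
rewrite !(entries_ofE _ (Ordinal top_lt)) => /eqP/esym.
move/(congr1 (index^~ S)); rewrite !index_uniq // => /val_inj fg_top.
by apply/ffunP => j; case: (eqVneq j (Ordinal top_lt)) => [->|]; last exact: fg.
Qed.

Lemma card_singular_draws N : forall rho n (B : 'M[K]_(rho, n)),
  \rank B = rho -> (n + rho <= N.+1)%N ->
  (#|singular_draws N B| * size S <= rho * #|{ffun 'I_N -> 'I_(size S)}|)%N.
Proof.
elim=> [|r IHr] n B rkB le_N.
  rewrite mul0n leqn0 muln_eq0 cards_eq0; apply/orP; left.
  by apply/eqP/setP => f; rewrite !inE det_mx00 oner_eq0.
elim: n B rkB le_N => [|n IHn] B rkB le_N.
  by have := rank_leq_col B; rewrite rkB.
have [B_max0|B_max_nz] := eqVneq (col ord_max B) 0.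
  have -> : singular_draws N B = singular_draws N (col' ord_max B).
    by apply/setP => f; rewrite !inE mul_hankel_col'_max.
  by apply: IHn; [rewrite mxrank_col'_max | lia].
have [B' rkB' B'_sing] := top_coef_mx_singular rkB B_max_nz.
have sub : singular_draws N B \subset
    singular_draws N B' :|: [set f in singular_draws N B |
                              \det (top_coef_mx B (entries_of 0 S f)) != 0].
  apply/subsetP => f f_sing; rewrite in_setU in_set f_sing inE.
  by case: (eqVneq (\det (top_coef_mx B (entries_of 0 S f))) 0) => [/B'_sing ->|];
    rewrite ?eqxx ?orbT.
apply: leq_trans (leq_mul (subset_leq_card sub) (leqnn _)) _.
apply: leq_trans (leq_mul (leq_card_setU _ _) (leqnn _)) _.
rewrite mulnDl mulSn addnC leq_add //; first by apply: card_singular_top_coef; lia.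
by apply: IHr; [exact: rkB' | lia].
Qed.

End SingularDraws.

Section ToeplitzPreconditioner.
Variable K : fieldType.

Lemma mxrank_sub_mul_tr m n t s (A : 'M[K]_(m, n)) (G : 'M[K]_(m, t)) (H : 'M[K]_(n, t)) :
  (\rank A <= s)%N -> (\rank (A - G *m H^T)%R <= s + t)%N.
Proof.
move=> rkA; apply: leq_trans (mxrank_add _ _) _.
by rewrite mxrank_opp leq_add // (leq_trans (mxrankM_maxl _ _)) ?rank_leq_col.
Qed.

(* The last [\rank X] columns of [toeplitz n r c], taken in reverse order,
   form [hankel n (\rank X) c]. *)
Lemma row_rank_profile_mul_toeplitz m n r (X : 'M[K]_(m, n)) (c : nat -> K) :
  (\rank X <= r)%N -> \det (row_base X *m hankel n (\rank X) c) != 0 ->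
  row_rank_profile (X *m toeplitz n r c) = row_rank_profile X.
Proof.
move=> rk_le minor_nz; apply: row_rank_profile_mulmx.
have lt_r (k : 'I_(\rank X)) : (r - 1 - k < r)%N by have := ltn_ord k; lia.
apply: (mxrank_mulmx_minor (g := fun k => Ordinal (lt_r k))).
suff -> : colsub (fun k => Ordinal (lt_r k)) (toeplitz n r c) = hankel n (\rank X) c by [].
by apply/matrixP => i k; rewrite !mxE /=; congr c; have := ltn_ord k; lia.
Qed.

(* The first [\rank X^T] columns of [(toeplitz r n c)^T] form
   [hankel n (\rank X^T) c] with its rows in reverse order. *)
Lemma col_rank_profile_toeplitz_mul m n r (X : 'M[K]_(n, m)) (c : nat -> K) :
  (\rank X <= r)%N ->
  \det (row_base X^T *m perm_mx (perm.perm (@rev_ord_inj n)) *m hankel n (\rank X^T) c) != 0 ->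
  col_rank_profile (toeplitz r n c *m X) = col_rank_profile X.
Proof.
move=> rk_le minor_nz; rewrite /col_rank_profile trmx_mul.
apply: row_rank_profile_mulmx.
have lt_r (k : 'I_(\rank X^T)) : (k < r)%N by rewrite (leq_trans (ltn_ord k)) ?mxrank_tr.
apply: (mxrank_mulmx_minor (g := fun k => Ordinal (lt_r k))).
suff -> : colsub (fun k => Ordinal (lt_r k)) (toeplitz r n c)^T =
          perm_mx (perm.perm (@rev_ord_inj n)) *m hankel n (\rank X^T) c by rewrite mulmxA.
rewrite -row_permE; apply/matrixP => i k; rewrite !mxE perm.permE /=.
by congr c; have := ltn_ord i; lia.
Qed.

End ToeplitzPreconditioner.

Lemma ratio_setX_compl (R : realFieldType) (T : finType) (B1 B2 : {set T})
    (E : {set T * T}) :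
  (0 < #|T|)%N -> setX (~: B1) (~: B2) \subset E ->
  1 - (#|B1|%:R + #|B2|%:R) / #|T|%:R <= (#|E|%:R / #|[set: T * T]|%:R : R).
Proof.
move=> T_gt0 /subset_leq_card; rewrite cardsX cardsT card_prod -(ler_nat R) !natrM.
have cardsC_R (B : {set T}) : #|~: B|%:R = #|T|%:R - #|B|%:R :> R.
  by rewrite -(cardsC B) natrD addrAC subrr add0r.
rewrite !cardsC_R => le_E.
have a_gt0 : 0 < #|T|%:R :> R by rewrite ltr0n.
rewrite ler_pdivlMr ?mulr_gt0 //.
have -> : (1 - (#|B1|%:R + #|B2|%:R) / #|T|%:R) * (#|T|%:R * #|T|%:R) =
          #|T|%:R * #|T|%:R - (#|B1|%:R + #|B2|%:R) * #|T|%:R :> R.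
  by field; rewrite gt_eqF.
apply: le_trans le_E; rewrite -subr_ge0.
have -> : forall a b1 b2 : R, (a - b1) * (a - b2) - (a * a - (b1 + b2) * a) = b1 * b2.
  by move=> *; ring.
by rewrite mulr_ge0 ?ler0n.
Qed.

Lemma ler_ratio_nat (R : numFieldType) (b a k s : nat) :
  (0 < a)%N -> (0 < s)%N -> (b * s <= k * a)%N -> b%:R / a%:R <= k%:R / s%:R :> R.
Proof.
move=> a_gt0 s_gt0 le_bs.
by rewrite ler_pdivlMr ?ltr0n // mulrAC ler_pdivrMr ?ltr0n // -!natrM ler_nat.
Qed.

Theorem mainTheorem4 (K : fieldType) (n s t : nat)
  (A : 'M[K]_n) (G H : 'M[K]_(n, t)) (S : seq K)
  (hA : (\rank A <= s)%N) (hSu : uniq S) (hS0 : (0 < size S)%N) :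
  let r := (s + t)%N in
  let M := A - G *m H^T in
  let good :=
    [set cd : {ffun 'I_(n + r - 1) -> 'I_(size S)} *
              {ffun 'I_(n + r - 1) -> 'I_(size S)} |
      let T1 : 'M[K]_(n, r) := toeplitz n r (entries_of 0 S cd.1) in
      let T2 : 'M[K]_(r, n) := toeplitz r n (entries_of 0 S cd.2) in
      let P := A *m T1 - G *m (H^T *m T1) in
      let Q := T2 *m A - (T2 *m G) *m H^T in
      (row_rank_profile P == row_rank_profile M) &&
      (col_rank_profile Q == col_rank_profile M)] in
  1 - (2 * r)%:R / (size S)%:R
    <= (#|good|%:R / #|[set: {ffun 'I_(n + r - 1) -> 'I_(size S)} *
                             {ffun 'I_(n + r - 1) -> 'I_(size S)}]|%:R : rat).
Proof.
cbv zeta; set r := (s + t)%N; set M := A - G *m H^T; set good := [set cd | _].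
have rkM : (\rank M <= r)%N by apply: mxrank_sub_mul_tr.
set N := (n + r - 1)%N.
pose B1 := row_base M; pose B2 := row_base M^T *m perm_mx (perm.perm (@rev_ord_inj n)).
have sub : setX (~: singular_draws S N B1) (~: singular_draws S N B2) \subset good.
  apply/subsetP => -[f1 f2] /setXP[]; rewrite !inE /= => minor1 minor2.
  rewrite mulmxA -mulmxBl -mulmxA -mulmxBr row_rank_profile_mul_toeplitz //.
  by rewrite col_rank_profile_toeplitz_mul ?eqxx.
have draws_gt0 : (0 < #|{ffun 'I_N -> 'I_(size S)}|)%N.
  by rewrite card_ffun card_ord expn_gt0 hS0.
have bad_le rho (B : 'M[K]_(rho, n)) : \rank B = rho -> (rho <= r)%N ->
    #|singular_draws S N B|%:R / #|{ffun 'I_N -> 'I_(size S)}|%:R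
      <= r%:R / (size S)%:R :> rat.
  move=> rkB le_r; apply: ler_ratio_nat => //.
  by rewrite (leq_trans (card_singular_draws hSu rkB _)) ?leq_mul2r ?le_r ?orbT //; lia.
apply: le_trans (ratio_setX_compl _ draws_gt0 sub).
rewrite lerD2l lerN2 mul2n -addnn natrD mulrDl mulrDl lerD //.
  by apply: bad_le; first by apply/eqP; apply: row_base_free.
apply: bad_le; last by rewrite mxrank_tr.
by rewrite mxrankMfree ?row_free_unit ?unitmx_perm //; apply/eqP; apply: row_base_free.
Qed.
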